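(* $F_{\{3,8\},\{0\}}$ is nonempty (the bisectors $\mathcal{B}_3$ and $\mathcal{B}_8$ meet in $H^2_\mathbb{C}$), but $\overline{F}_{\{3,8\},\{0,2,6\}}=\emptyset$. In particular $F_{\{3,8\}}=\emptyset$.
   Context: Hermitian form on $\mathbb{C}^3$: $\langle V,W\rangle=V_1\overline{W_3}+V_2\overline{W_2}+V_3\overline{W_1}$. Let $$G_1=\begin{pmatrix}1&1&-\frac{1+i\sqrt7}{2}\\0&1&-1\\0&0&1\end{pmatrix},\quad G_3=\begin{pmatrix}1&0&0\\-1&1&0\\ \frac{-1+i\sqrt7}{2}&1&1\end{pmatrix},\quad G_2=G_3G_1^{-1}G_3^{-1}G_1,$$ $Q=(1,0,0)^T$. Set $\gamma_1=G_2,\gamma_2=G_2^{-1},\gamma_3=G_3,\gamma_4=G_3^{-1}$ and, for $k\ge1$ and $1\le j\le4$, $\gamma_{8k-4+j}=G_1^k\gamma_jG_1^{-k}$, $\gamma_{8k+j}=G_1^{-k}\gamma_jG_1^{k}$. For $Z\in\mathbb{C}^3\setminus\{0\}$ let $f_0(Z)=\langle Z,Z\rangle$ and $f_j(Z)=|\langle Z,Q\rangle|^2-|\langle Z,\gamma_jQ\rangle|^2$ for $j\ge1$ (signs defined on $\mathbb{C}P^2$); $\mathcal{B}_j=\{f_j=0,f_0<0\}$. Let $I=\{0,1,2,\dots\}$. For disjoint $J,K\subset I$, $F_{J,K}=\{[Z]\in\mathbb{C}P^2: f_j(Z)=0\ \forall j\in J,\ f_i(Z)<0\ \forall i\in K\}$,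 $\overline{F}_{J,K}$ is defined likewise with $f_i\le0$ for $i\in K$, and $F_J=F_{J,I\setminus J}$. *)

From HB Require Import structures.
From mathcomp Require Import all_boot all_order all_algebra.
Set Implicit Arguments. Unset Strict Implicit. Unset Printing Implicit Defensive.
Import Order.TTheory GRing.Theory Num.Theory.
Local Open Scope ring_scope.

Section Defs.
Variable C : numClosedFieldType.

Definition mx3 (a b c d e f g h k : C) : 'M[C]_3 :=
  \matrix_(i < 3, j < 3)
    nth 0 (nth [::] [:: [:: a; b; c]; [:: d; e; f]; [:: g; h; k]] i) j.

(* Hermitian form <V,W> = V1 conj(W3) + V2 conj(W2) + V3 conj(W1) *)
Definition herm (V W : 'cV[C]_3) : C :=
  \sum_(i < 3) V i 0 * (W (rev_ord i) 0)^*.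

Definition G1 : 'M[C]_3 :=
  mx3 1 1 (- ((1 + 'i * sqrtC 7) / 2))
      0 1 (-1)
      0 0 1.

Definition G3 : 'M[C]_3 :=
  mx3 1 0 0
      (-1) 1 0
      ((-1 + 'i * sqrtC 7) / 2) 1 1.

Definition G2 : 'M[C]_3 := G3 * invmx G1 * invmx G3 * G1.

Definition Qpt : 'cV[C]_3 := \col_(i < 3) (if i == ord0 then 1 else 0).

Definition gamma_base (i : nat) : 'M[C]_3 :=
  match i with
  | 1 => G2
  | 2 => invmx G2
  | 3 => G3
  | _ => invmx G3
  end.

(* For j >= 1: j = 8k + i (k >= 0, 1 <= i <= 4): gamma_j = G1^-k gamma_i G1^k
   (k = 0 gives gamma_1..gamma_4);
   j = 8k - 4 + i (k >= 1, 1 <= i <= 4): gamma_j = G1^k gamma_i G1^-k.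
   gamma 0 is unused (f_0 is defined separately). *)
Definition gamma (j : nat) : 'M[C]_3 :=
  if (1 <= j %% 8 <= 4)%N then
    let k := (j %/ 8)%N in
    (invmx G1) ^+ k * gamma_base (j %% 8) * G1 ^+ k
  else
    let k := ((j + 4) %/ 8)%N in
    G1 ^+ k * gamma_base ((j + 4) %% 8) * (invmx G1) ^+ k.

Definition fj (j : nat) (Z : 'cV[C]_3) : C :=
  if j == 0%N then herm Z Z
  else `|herm Z Qpt| ^+ 2 - `|herm Z (gamma j *m Qpt)| ^+ 2.

(* Points of CP^2 are represented by nonzero vectors; all conditions are
   invariant under scaling by nonzero scalars. *)
Definition F (J K : nat -> Prop) (Z : 'cV[C]_3) : Prop :=
  Z != 0 /\ (forall j, J j -> fj j Z = 0) /\ (forall i, K i -> fj i Z < 0).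

Definition Fbar (J K : nat -> Prop) (Z : 'cV[C]_3) : Prop :=
  Z != 0 /\ (forall j, J j -> fj j Z = 0) /\ (forall i, K i -> fj i Z <= 0).

End Defs.

(** The points [gamma_j Q] for [j = 2, 3, 6, 8] are explicit vectors over
    [Z[w]], [w = (-1 + i sqrt 7)/2], and for every [Z]
      [2 (2 f0 + f2 + f6 - f3 - f8) = 4 |Z1 - (1 + w) Z2|^2 + |2 Z2 + Z3|^2 + |Z3|^2].
    On [B3 ∩ B8] the left side is [2 (2 f0 + f2 + f6)], so [f0, f2, f6 <= 0]
    forces [Z = 0].  On the other hand [Z = (-1 - w, -1, 2)] lies on both
    bisectors and [<Z, Z> = -1]. *)

From HB Require Import structures.
From mathcomp Require Import all_boot all_order all_algebra.
From mathcomp Require Import ring.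
Import Order.TTheory GRing.Theory Num.Theory.
Local Open Scope ring_scope.

Section Bisectors38.
Variable C : numClosedFieldType.

Definition col3 (x y z : C) : 'cV[C]_3 := \col_(i < 3) nth 0 [:: x; y; z] i.

Lemma col3_eta (Z : 'cV[C]_3) : Z = col3 (Z 0 0) (Z 1 0) (Z 2 0).
Proof.
apply/matrixP => i j; rewrite (ord1 j) mxE.
by case: i => [[|[|[|?]]] ?] //=; congr (Z _ _); exact: val_inj.
Qed.

Lemma col3_eq0 (x y z : C) : (col3 x y z == 0) = [&& x == 0, y == 0 & z == 0].
Proof.
apply/eqP/and3P => [/matrixP Z0 | [/eqP-> /eqP-> /eqP->]].
  by move: (Z0 0 0) (Z0 1 0) (Z0 2 0); rewrite !mxE /= => -> -> ->.
by apply/matrixP => i j; rewrite !mxE; case: i => [[|[|[|?]]] ?].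
Qed.

Lemma mulmx_mx3_col3 (a b c d e f g h k x y z : C) :
  mx3 a b c d e f g h k *m col3 x y z =
  col3 (a * x + b * y + c * z) (d * x + e * y + f * z) (g * x + h * y + k * z).
Proof.
apply/matrixP => i j; rewrite !mxE !big_ord_recr big_ord0 /= !mxE /= add0r.
by case: i => [[|[|[|?]]] ?].
Qed.

Lemma mulmx_mx3 (a b c d e f g h k a' b' c' d' e' f' g' h' k' : C) :
  mx3 a b c d e f g h k *m mx3 a' b' c' d' e' f' g' h' k' =
  mx3 (a * a' + b * d' + c * g') (a * b' + b * e' + c * h') (a * c' + b * f' + c * k')
      (d * a' + e * d' + f * g') (d * b' + e * e' + f * h') (d * c' + e * f' + f * k')
      (g * a' + h * d' + k * g') (g * b' + h * e' + k * h') (g * c' + h * f' + k * k').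
Proof.
apply/matrixP => i j; rewrite !mxE !big_ord_recr big_ord0 /= !mxE /= add0r.
by case: i => [[|[|[|?]]] ?]; case: j => [[|[|[|?]]] ?].
Qed.

Lemma mx3_id : mx3 1 0 0 0 1 0 0 0 1 = 1%:M :> 'M[C]_3.
Proof.
apply/matrixP => i j; rewrite !mxE.
by case: i => [[|[|[|?]]] ?]; case: j => [[|[|[|?]]] ?].
Qed.

Lemma herm_col3 (a b c x y z : C) :
  herm (col3 a b c) (col3 x y z) = a * z^* + b * y^* + c * x^*.
Proof. by rewrite /herm !big_ord_recr big_ord0 /= !mxE /= add0r. Qed.

Lemma Qpt_col3 : Qpt C = col3 1 0 0.
Proof. by apply/matrixP => i j; rewrite !mxE; case: i => [[|[|[|?]]] ?]. Qed.

Lemma mulmx1_invmx (A B : 'M[C]_3) : A *m B = 1%:M -> invmx A = B.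
Proof.
move=> AB1; have [A_unit _] := mulmx1_unit AB1.
by rewrite -[invmx A]mulmx1 -AB1 mulmxA mulVmx // mul1mx.
Qed.

(* Locked so that [ring] treats [w] as an atom subject to [w_sqr]. *)
Definition w : C := locked ((-1 + 'i * sqrtC 7) / 2).

Lemma w_sqr : w ^+ 2 = - w - 2.
Proof.
have i_sqrt7_sqr : ('i * sqrtC 7) ^+ 2 = - 7 :> C.
  by rewrite exprMn sqrCi sqrtCK mulN1r.
by rewrite /w -lock; field: i_sqrt7_sqr.
Qed.

Lemma conj_w : w^* = -1 - w.
Proof.
have sqrt7_real : (sqrtC 7 : C)^* = sqrtC 7 by rewrite geC0_conj ?sqrtC_ge0 ?ler0n.
rewrite /w -lock fmorph_div rmorphD rmorphN rmorph1 rmorphM /= conjCi sqrt7_real.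
by rewrite rmorph_nat; field.
Qed.

Definition G1w := mx3 1 1 (-1 - w) 0 1 (-1) 0 0 1.
Definition G3w := mx3 1 0 0 (-1) 1 0 w 1 1.
Definition G1w_inv := mx3 1 (-1) w 0 1 1 0 0 1.
Definition G3w_inv := mx3 1 0 0 1 1 0 (-1 - w) (-1) 1.

Lemma G1_w : G1 C = G1w.
Proof. by rewrite /G1 /G1w /w -lock; congr mx3; field. Qed.

Lemma G3_w : G3 C = G3w.
Proof. by rewrite /G3w /w -lock. Qed.

Lemma invmx_G1w : invmx G1w = G1w_inv.
Proof. by apply: mulmx1_invmx; rewrite mulmx_mx3 -mx3_id; congr mx3; ring. Qed.

Lemma invmx_G3w : invmx G3w = G3w_inv.
Proof. by apply: mulmx1_invmx; rewrite mulmx_mx3 -mx3_id; congr mx3; ring. Qed.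

Lemma invmx_G2 : invmx (G2 C) = G1w_inv *m G3w *m G1w *m G3w_inv.
Proof.
apply: mulmx1_invmx; rewrite /G2 G1_w G3_w invmx_G1w invmx_G3w -!mulmxE.
by rewrite !mulmx_mx3 -mx3_id; congr mx3; ring: w_sqr.
Qed.

Lemma gamma2_Qpt : gamma C 2 *m Qpt C = col3 0 0 (-1).
Proof.
rewrite /gamma /= expr0 mul1r mulr1 invmx_G2 Qpt_col3 !mulmx_mx3 mulmx_mx3_col3.
by congr col3; ring: w_sqr.
Qed.

Lemma gamma3_Qpt : gamma C 3 *m Qpt C = col3 1 (-1) w.
Proof.
rewrite /gamma /= expr0 mul1r mulr1 G3_w Qpt_col3 mulmx_mx3_col3.
by congr col3; ring.
Qed.

Lemma gamma6_Qpt : gamma C 6 *m Qpt C = col3 (1 + w) 1 (-1).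
Proof.
rewrite /gamma /= !expr1 invmx_G2 G1_w invmx_G1w Qpt_col3 -!mulmxE.
by rewrite !mulmx_mx3 mulmx_mx3_col3; congr col3; ring: w_sqr.
Qed.

Lemma gamma8_Qpt : gamma C 8 *m Qpt C = col3 (1 + w) (2 + w) (-1 - w).
Proof.
rewrite /gamma /= !expr1 G3_w G1_w invmx_G1w invmx_G3w Qpt_col3 -!mulmxE.
by rewrite !mulmx_mx3 mulmx_mx3_col3; congr col3; ring: w_sqr.
Qed.

Ltac conj_expand :=
  do 2 rewrite ?(rmorphD, rmorphN, rmorphB, rmorphM, rmorph1, rmorph0, rmorph_nat)
               /= ?conj_w.

Lemma fj_sum_of_squares (Z : 'cV[C]_3) :
  2 * (2 * fj 0 Z + fj 2 Z + fj 6 Z - fj 3 Z - fj 8 Z) =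
  4 * `|Z 0 0 - (1 + w) * Z 1 0| ^+ 2 + `|2 * Z 1 0 + Z 2 0| ^+ 2 + `|Z 2 0| ^+ 2.
Proof.
rewrite /fj /= gamma2_Qpt gamma3_Qpt gamma6_Qpt gamma8_Qpt Qpt_col3.
rewrite [in LHS](col3_eta Z) !herm_col3 !normCK; conj_expand; ring: w_sqr.
Qed.

Lemma bisectors38_nonpos_eq0 (Z : 'cV[C]_3) :
  fj 3 Z = 0 -> fj 8 Z = 0 -> fj 0 Z <= 0 -> fj 2 Z <= 0 -> fj 6 Z <= 0 ->
  Z = 0.
Proof.
move=> f3 f8 f0 f2 f6.
have := fj_sum_of_squares Z; rewrite f3 f8 !subr0.
set a := Z 0 0 - (1 + w) * Z 1 0; set b := 2 * Z 1 0 + Z 2 0 => sos.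
have sq_ge0 (x : C) : 0 <= `|x| ^+ 2 by rewrite exprn_ge0.
have a_ge0 : 0 <= 4 * `|a| ^+ 2 by rewrite mulr_ge0 ?ler0n.
have sos_le0 : 4 * `|a| ^+ 2 + `|b| ^+ 2 + `|Z 2 0| ^+ 2 <= 0.
  have := lerD (lerD (mulr_ge0_le0 (ler0n C 2) f0) f2) f6; rewrite !addr0.
  by rewrite -sos; apply: mulr_ge0_le0.
have /eqP : 4 * `|a| ^+ 2 + `|b| ^+ 2 + `|Z 2 0| ^+ 2 = 0.
  by apply/eqP; rewrite eq_le sos_le0 !addr_ge0.
rewrite !paddr_eq0 ?addr_ge0 // mulf_eq0 pnatr_eq0 !sqrf_eq0 !normr_eq0 /=.
case/andP => /andP[/eqP a0 /eqP b0] /eqP c0.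
have Z1 : Z 1 0 = 0.
  by apply/eqP; move/eqP: b0; rewrite /b c0 addr0 mulf_eq0 pnatr_eq0.
have Z0 : Z 0 0 = 0 by move: a0; rewrite /a Z1 mulr0 subr0.
by apply/eqP; rewrite (col3_eta Z) col3_eq0 Z0 Z1 c0 eqxx.
Qed.

Definition Zw : 'cV[C]_3 := col3 (-1 - w) (-1) 2.

Lemma Zw_neq0 : Zw != 0.
Proof. by rewrite col3_eq0 !pnatr_eq0 oppr_eq0 oner_eq0 !andbF. Qed.

Lemma fj3_Zw : fj 3 Zw = 0.
Proof.
rewrite /fj /= gamma3_Qpt Qpt_col3 !herm_col3 !normCK; conj_expand; ring: w_sqr.
Qed.

Lemma fj8_Zw : fj 8 Zw = 0.
Proof.
rewrite /fj /= gamma8_Qpt Qpt_col3 !herm_col3 !normCK; conj_expand; ring: w_sqr.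
Qed.

Lemma fj0_Zw : fj 0 Zw = -1.
Proof. by rewrite /fj /= herm_col3; conj_expand; ring. Qed.

End Bisectors38.

Lemma F_Fbar (C : numClosedFieldType) (J K K' : nat -> Prop) (Z : 'cV[C]_3) :
  (forall i, K' i -> K i) -> F J K Z -> Fbar J K' Z.
Proof. by move=> K'K [Z0 [fJ fK]]; split=> //; split=> // i /K'K /fK /ltW. Qed.

Theorem proposition5p8 (C : numClosedFieldType) :
  (exists Z : 'cV[C]_3,
     F (fun j => j = 3%N \/ j = 8%N) (fun i => i = 0%N) Z) /\
  (forall Z : 'cV[C]_3,
     ~ Fbar (fun j => j = 3%N \/ j = 8%N)
            (fun i => i = 0%N \/ i = 2%N \/ i = 6%N) Z) /\
  (forall Z : 'cV[C]_3,
     ~ F (fun j => j = 3%N \/ j = 8%N)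
         (fun i => ~ (i = 3%N \/ i = 8%N)) Z).
Proof.
have Fbar_empty (Z : 'cV[C]_3) :
    ~ Fbar (fun j => j = 3%N \/ j = 8%N)
           (fun i => i = 0%N \/ i = 2%N \/ i = 6%N) Z.
  move=> [Z_neq0 [f38 f026]]; move/eqP: Z_neq0; apply.
  apply: bisectors38_nonpos_eq0.
  - exact: f38 3%N (or_introl erefl).
  - exact: f38 8%N (or_intror erefl).
  - exact: f026 0%N (or_introl erefl).
  - exact: f026 2%N (or_intror (or_introl erefl)).
  - exact: f026 6%N (or_intror (or_intror erefl)).
split; [|split; first exact: Fbar_empty].
  exists (Zw C); split; first exact: Zw_neq0.
  split; first by move=> j [->|->]; [exact: fj3_Zw | exact: fj8_Zw].
  by move=> i ->; rewrite fj0_Zw ltrN10.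
move=> Z FZ; apply: (Fbar_empty Z); apply: F_Fbar FZ.
by move=> i [->|[->|->]] [].
Qed.
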